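(* Let $M$ be a matching of size $k$ and let $N$ be a matching of size $k+2$ having a separated pair $K$ such that $N-K$ equals $M$ up to cyclic relabeling. Then the connected component of $N$ in $\mathbf{DCM}_{k+2}$ has at least as many vertices as the connected component of $M$ in $\mathbf{DCM}_k$.
   Context: Let $k\ge 1$ and let $X_{2k}=\{P_1,\dots,P_{2k}\}$ be $2k$ points in convex position in the plane, labeled in clockwise cyclic order; indices are taken modulo $2k$. A matching of $X_{2k}$ means a set of $k$ pairwise non-crossing straight segments (edges) with endpoints in $X_{2k}$ covering every point exactly once; its size is $k$. Two matchings $M,M'$ of $X_{2k}$ are disjoint compatible if they have no common edge and no edge of $M$ crosses an edge of $M'$. $\mathbf{DCM}_k$ is the graph whose vertices are the matchings of $X_{2k}$, two being adjacent iff they are disjoint compatible. A block of a matching $M$ is a pair of edges $\{P_iP_{i+3},P_{i+1}P_{i+2}\}\subseteq M$; an antiblock is a pair of edges $\{P_iP_{i+1},P_{i+2}P_{i+3}\}\subseteq M$; a separated pair is a block or an antiblock. If $K$ is a separated pair of a matching $N$ of size $k+2$, then $N-K$ denotes the set $N\setminus K$, regarded as a matching of the remaining $2k$ points (which are in convex position) with their inherited cyclic order, i.e. as a matching of size $k$ defined up to cyclic relabeling. *)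

From mathcomp Require Import all_boot.
Set Implicit Arguments. Unset Strict Implicit. Unset Printing Implicit Defensive.

(* Points P_1..P_{2k} in convex position are indexed by 'I_(2*k) in clockwise
   cyclic order.  A matching is a fixed-point-free involution m (edge {i, m i})
   whose edges pairwise do not cross. *)

(* Chords {a,b} and {c,d} between points in convex position (labelled in
   cyclic order) cross (meet in their relative interiors) iff the four
   endpoints are distinct and exactly one of c,d lies strictly between a and b. *)
Definition cross (a b c d : nat) : bool :=
  [&& a != b, c != d, c \notin [:: a; b], d \notin [:: a; b] &
   ((minn a b < c < maxn a b) != (minn a b < d < maxn a b))].

Definition is_matching (k : nat) (m : {ffun 'I_(2 * k) -> 'I_(2 * k)}) : bool :=
  [forall i, (m i != i) && (m (m i) == i)] &&
  [forall i : 'I_(2 * k), forall j : 'I_(2 * k), ~~ cross i (m i) j (m j)].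

Definition matching (k : nat) := {m : {ffun 'I_(2 * k) -> 'I_(2 * k)} | is_matching m}.

Definition medge (k : nat) (M : matching k) (i : 'I_(2 * k)) : 'I_(2 * k) := val M i.

Definition dcm_adj (k : nat) : rel (matching k) := fun M M' =>
  [forall i, medge M i != medge M' i] &&
  [forall i : 'I_(2 * k), forall j : 'I_(2 * k), ~~ cross i (medge M i) j (medge M' j)].

Definition dcm_component (k : nat) (M : matching k) : {set matching k} :=
  [set M' | connect (@dcm_adj k) M M'].

(* Separated pairs of a matching N of size k+2 (on 2k+4 points), starting at
   the point of index i, i.e. involving points i, i+1, i+2, i+3 (mod 2k+4). *)
Definition is_block (k : nat) (N : matching (k + 2)) (i : nat) : Prop :=
  (forall x : 'I_(2 * (k + 2)), val x = i %% (2 * (k + 2)) ->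
     val (medge N x) = (i + 3) %% (2 * (k + 2))) /\
  (forall x : 'I_(2 * (k + 2)), val x = (i + 1) %% (2 * (k + 2)) ->
     val (medge N x) = (i + 2) %% (2 * (k + 2))).

Definition is_antiblock (k : nat) (N : matching (k + 2)) (i : nat) : Prop :=
  (forall x : 'I_(2 * (k + 2)), val x = i %% (2 * (k + 2)) ->
     val (medge N x) = (i + 1) %% (2 * (k + 2))) /\
  (forall x : 'I_(2 * (k + 2)), val x = (i + 2) %% (2 * (k + 2)) ->
     val (medge N x) = (i + 3) %% (2 * (k + 2))).

Definition is_separated_pair (k : nat) (N : matching (k + 2)) (i : nat) : Prop :=
  is_block N i \/ is_antiblock N i.

(* After removing the points i..i+3, the remaining 2k points of X_{2k+4}
   are i+4, i+5, ..., i+2k+3 (mod 2k+4), in cyclic order.  Under a cyclic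
   relabeling by r, label j of X_{2k} corresponds to the remaining point
   i + 4 + ((j + r) mod 2k)  (mod 2k+4). *)
Definition relabel (k i r j : nat) : nat :=
  (i + 4 + (j + r) %% (2 * k)) %% (2 * (k + 2)).

Definition minus_pair_eq (k : nat) (N : matching (k + 2)) (i : nat)
  (M : matching k) : Prop :=
  exists r : nat, forall (j : 'I_(2 * k)) (x : 'I_(2 * (k + 2))),
    val x = relabel k i r j -> val (medge N x) = relabel k i r (medge M j).

From mathcomp Require Import all_boot zify.
Set Implicit Arguments. Unset Strict Implicit. Unset Printing Implicit Defensive.

(* Insertion of a separated pair: rotate a matching M' of size k by the relabelling, put a
   block or an antiblock on four new points, and rotate so that these become P_i..P_(i+3).
   A block and an antiblock on the same four points share no edge and cross neither each
   other nor any chord on the remaining points, so inserting a block into M' and an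
   antiblock into a neighbour M'' of M' (or vice versa) gives neighbours in DCM_(k+2).
   Alternating the type along a path from M, every matching of the component of M yields an
   insertion lying in the component of N, and insertion is injective. *)

Definition between a b c := (a < c < b) || (b < c < a).

Lemma crossE a b c d : cross a b c d =
  [&& a != b, c != d, c != a, c != b, d != a, d != b &
      (between a b c && ~~ between a b d) || (~~ between a b c && between a b d)].
Proof.
rewrite /cross /between !inE.
case: (c == a); case: (c == b); case: (d == a); case: (d == b); rewrite ?andbF ?andbT //=.
by case: (ltngtP a b) => ab //=; apply/idP/idP; lia.
Qed.

Lemma crossC a b c d : cross a b c d = cross c d a b.
Proof. by rewrite !crossE /between; apply/idP/idP; lia. Qed.

Lemma cross_addl s a b c d : cross (s + a) (s + b) (s + c) (s + d) = cross a b c d.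
Proof. by rewrite !crossE /between; apply/idP/idP; lia. Qed.

Lemma cross_ltn_leq L a b c d : a < L -> b < L -> L <= c -> L <= d -> ~~ cross a b c d.
Proof. by move=> *; rewrite crossE /between; lia. Qed.

Lemma modS_cases m x : x < m -> (x.+1 < m /\ x.+1 %% m = x.+1) \/ (x.+1 = m /\ x.+1 %% m = 0).
Proof.
move=> ltxm; case: (ltnP x.+1 m) => lt1; first by left; rewrite modn_small.
have -> : x.+1 = m by lia.
by right; rewrite modnn.
Qed.

(* Crossing depends only on the cyclic order of the endpoints; the case split is on which
   endpoints wrap around from m-1 to 0. *)
Lemma cross_modS m a b c d : a < m -> b < m -> c < m -> d < m ->
  cross (a.+1 %% m) (b.+1 %% m) (c.+1 %% m) (d.+1 %% m) = cross a b c d.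
Proof.
move=> /modS_cases A /modS_cases B /modS_cases C /modS_cases D; rewrite !crossE /between.
by case: A => [[? ->]|[? ->]]; case: B => [[? ->]|[? ->]];
   case: C => [[? ->]|[? ->]]; case: D => [[? ->]|[? ->]]; apply/idP/idP; lia.
Qed.

Lemma cross_modD m s a b c d : a < m -> b < m -> c < m -> d < m ->
  cross ((a + s) %% m) ((b + s) %% m) ((c + s) %% m) ((d + s) %% m) = cross a b c d.
Proof.
move=> lta ltb ltc ltd; have m_gt0 : 0 < m by lia.
elim: s => [|s IHs]; first by rewrite !addn0 !modn_small.
have addSmod x : (x + s.+1) %% m = ((x + s) %% m).+1 %% m.
  by rewrite -[in RHS]addn1 modnDml -addnA addn1.
by rewrite !addSmod cross_modS ?ltn_pmod.
Qed.

Lemma medgeK K (M : matching K) : involutive (medge M).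
Proof. by move=> x; case/andP: (valP M) => /forallP inv _; case/andP: (inv x) => _ /eqP. Qed.

Lemma medge_symmetric K (N : matching K) a c : a < 2 * K ->
  (forall y : 'I_(2 * K), val y = a -> val (medge N y) = c) ->
  forall x : 'I_(2 * K), val x = c -> val (medge N x) = a.
Proof.
move=> lt_a a_c x xc; have := a_c (Ordinal lt_a) erefl.
by rewrite -xc => /val_inj <-; rewrite medgeK.
Qed.

Section Transport.
Variables (K : nat) (g h : 'I_(2 * K) -> 'I_(2 * K)).
Hypotheses (gK : cancel g h) (hK : cancel h g).
Hypothesis cross_g : forall a b c d, cross (g a) (g b) (g c) (g d) = cross a b c d.

Definition transport_fun (f : {ffun 'I_(2 * K) -> 'I_(2 * K)}) : {ffun 'I_(2 * K) -> 'I_(2 * K)} :=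
  [ffun x => g (f (h x))].

Lemma transport_funE f x : transport_fun f (g x) = g (f x).
Proof. by rewrite ffunE gK. Qed.

Lemma transport_is_matching f : is_matching f -> is_matching (transport_fun f).
Proof.
case/andP => /forallP inv /forallP nc; apply/andP; split.
  by apply/forallP => x; rewrite -(hK x) !transport_funE !(inj_eq (can_inj gK)).
apply/forallP => x; apply/forallP => y.
by rewrite -(hK x) -(hK y) !transport_funE cross_g; apply: (forallP (nc _)).
Qed.

Definition transport (M : matching K) : matching K :=
  exist _ (transport_fun (val M)) (transport_is_matching (valP M)).

Lemma medge_transport M x : medge (transport M) (g x) = g (medge M x).
Proof. exact: transport_funE. Qed.

Lemma transport_adj M M' : dcm_adj M M' -> dcm_adj (transport M) (transport M').
Proof.
case/andP => /forallP disj /forallP nc; apply/andP; split.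
  by apply/forallP => x; rewrite -(hK x) !medge_transport (inj_eq (can_inj gK)).
apply/forallP => x; apply/forallP => y.
by rewrite -(hK x) -(hK y) !medge_transport cross_g; apply: (forallP (nc _)).
Qed.

Lemma transport_inj : injective transport.
Proof.
move=> M M' eqMM'; apply/val_inj/ffunP => x; apply: (can_inj gK).
by rewrite -!medge_transport eqMM'.
Qed.

End Transport.

Definition rot_ord n s (x : 'I_n) : 'I_n := insubd x ((x + s) %% n).

Lemma rot_ordE n s (x : 'I_n) : val (rot_ord s x) = (x + s) %% n.
Proof. by rewrite /rot_ord insubdK //; apply: ltn_pmod; apply: leq_ltn_trans (ltn_ord x). Qed.

Lemma modnD_sub_mod n a s : 0 < n -> (a + s + (n - s %% n)) %% n = a %% n.
Proof.
move=> n_gt0; rewrite {1}(divn_eq s n).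
have ltsn := ltn_pmod s n_gt0.
have -> : a + (s %/ n * n + s %% n) + (n - s %% n) = (s %/ n).+1 * n + a by rewrite mulSn; lia.
by rewrite modnMDl.
Qed.

Lemma rot_ordK n s : cancel (@rot_ord n s) (rot_ord (n - s %% n)).
Proof.
move=> x; apply: val_inj; have n_gt0 : 0 < n by apply: leq_ltn_trans (ltn_ord x).
by rewrite !rot_ordE modnDml modnD_sub_mod // modn_small.
Qed.

Lemma rot_ordKV n s : cancel (rot_ord (n - s %% n)) (@rot_ord n s).
Proof.
move=> x; apply: val_inj; have n_gt0 : 0 < n by apply: leq_ltn_trans (ltn_ord x).
by rewrite !rot_ordE modnDml addnAC modnD_sub_mod // modn_small.
Qed.

Lemma cross_rot_ord n s (a b c d : 'I_n) :
  cross (rot_ord s a) (rot_ord s b) (rot_ord s c) (rot_ord s d) = cross a b c d.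
Proof. by rewrite !rot_ordE cross_modD. Qed.

Definition rot_matching K s : matching K -> matching K :=
  transport (@rot_ordK _ s) (@rot_ordKV _ s) (@cross_rot_ord _ s).

(* The partner of point t < 4 in a block ({0,3},{1,2}) or an antiblock ({0,1},{2,3}). *)
Definition pair_partner (block : bool) t := if block then 3 - t else if odd t then t.-1 else t.+1.

Lemma pair_partner_lt b t : t < 4 -> pair_partner b t < 4.
Proof. by case: b; case: t => [|[|[|[|t]]]]. Qed.

Lemma pair_partnerK b t : t < 4 -> pair_partner b (pair_partner b t) = t.
Proof. by case: b; case: t => [|[|[|[|t]]]]. Qed.

Lemma pair_partner_neq b t : t < 4 -> pair_partner b t != t.
Proof. by case: b; case: t => [|[|[|[|t]]]]. Qed.

Lemma pair_partner_negb_neq b t : t < 4 -> pair_partner b t != pair_partner (~~ b) t.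
Proof. by case: b; case: t => [|[|[|[|t]]]]. Qed.

Lemma pair_partner_noncross b b' t u :
  t < 4 -> u < 4 -> ~~ cross t (pair_partner b t) u (pair_partner b' u).
Proof. by case: b; case: b'; case: t => [|[|[|[|t]]]]; case: u => [|[|[|[|u]]]]. Qed.

Section AppendPair.
Variable k : nat.
Local Notation n := (2 * (k + 2)).
Local Notation m := (2 * k).

Definition append_val (f : {ffun 'I_m -> 'I_m}) block (x : 'I_n) : nat :=
  if insub (val x) is Some j then f j : nat else m + pair_partner block (x - m).

Definition append_fun f block : {ffun 'I_n -> 'I_n} := [ffun x => insubd x (append_val f block x)].

Lemma append_val_lt f b x : append_val f b x < n.
Proof.
rewrite /append_val; case: insubP => [j _ _|]; first by have := ltn_ord (f j); lia.
rewrite -leqNgt => le_m_x; have := ltn_ord x; have := @pair_partner_lt b (x - m); lia.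
Qed.

Lemma append_fun_old f b (j : 'I_m) (x : 'I_n) : x = j :> nat -> append_fun f b x = f j :> nat.
Proof.
move=> xj; rewrite ffunE insubdK; last exact: append_val_lt.
rewrite /append_val; case: insubP => [j' _ j'x|]; last by rewrite /= xj ltn_ord.
by have -> : j' = j by apply: val_inj; exact: etrans j'x xj.
Qed.

Lemma append_fun_new f b (x : 'I_n) :
  m <= x -> append_fun f b x = m + pair_partner b (x - m) :> nat.
Proof.
move=> le_m_x; rewrite ffunE insubdK; last exact: append_val_lt.
rewrite /append_val; case: insubP => [j' /= lt_x_m _|//]; move: lt_x_m le_m_x; lia.
Qed.

Lemma ord_old_or_new (x : 'I_n) : (exists j : 'I_m, x = j :> nat) \/ (m <= x /\ x - m < 4).
Proof.
case: (ltnP x m) => [lt_x_m|le_m_x]; first by left; exists (Ordinal lt_x_m).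
by right; have := ltn_ord x; lia.
Qed.

Lemma append_fun_noncross (f f' : {ffun 'I_m -> 'I_m}) b b' :
  (forall j j' : 'I_m, ~~ cross j (f j) j' (f' j')) ->
  forall x y : 'I_n, ~~ cross x (append_fun f b x) y (append_fun f' b' y).
Proof.
move=> nc x y.
have [[j xj]|[le_m_x ltx]] := ord_old_or_new x; have [[j' yj]|[le_m_y lty]] := ord_old_or_new y.
- by rewrite (append_fun_old _ _ xj) (append_fun_old _ _ yj) xj yj.
- by apply: (@cross_ltn_leq m);
    rewrite ?(append_fun_old _ _ xj) ?(append_fun_new _ _ le_m_y) ?xj ?leq_addr.
- by rewrite crossC; apply: (@cross_ltn_leq m);
    rewrite ?(append_fun_old _ _ yj) ?(append_fun_new _ _ le_m_x) ?yj ?leq_addr.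
- rewrite (append_fun_new _ _ le_m_x) (append_fun_new _ _ le_m_y).
  by rewrite -{1}(subnKC le_m_x) -{1}(subnKC le_m_y) cross_addl pair_partner_noncross.
Qed.

Lemma append_is_matching f b : is_matching f -> is_matching (append_fun f b).
Proof.
case/andP => /forallP inv /forallP nc; apply/andP; split; last first.
  apply/forallP => x; apply/forallP => y; apply: append_fun_noncross => j j'.
  exact: (forallP (nc j)).
apply/forallP => x; rewrite -!(inj_eq (@ord_inj _)).
have [[j xj]|[le_m_x ltx]] := ord_old_or_new x.
  have fxj : append_fun f b x = f j :> nat by exact: append_fun_old.
  by rewrite (append_fun_old _ _ fxj) fxj xj !(inj_eq (@ord_inj _)).
have fx := append_fun_new f b le_m_x.
have le_m_fx : m <= append_fun f b x by rewrite fx leq_addr.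
rewrite (append_fun_new _ _ le_m_fx) fx addKn pair_partnerK // subnKC // eqxx andbT.
by have := pair_partner_neq b ltx; lia.
Qed.

Definition append_pair (M : matching k) block : matching (k + 2) :=
  exist _ (append_fun (val M) block) (append_is_matching block (valP M)).

Lemma medge_append_pair_old M b (j : 'I_m) (x : 'I_n) :
  x = j :> nat -> medge (append_pair M b) x = medge M j :> nat.
Proof. exact: append_fun_old. Qed.

Lemma medge_append_pair_new M b (x : 'I_n) :
  m <= x -> medge (append_pair M b) x = m + pair_partner b (x - m) :> nat.
Proof. exact: append_fun_new. Qed.

Lemma append_pair_adj M M' b : dcm_adj M M' -> dcm_adj (append_pair M b) (append_pair M' (~~ b)).
Proof.
case/andP => /forallP disj /forallP nc; apply/andP; split; last first.
  apply/forallP => x; apply/forallP => y; apply: append_fun_noncross => j j'.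
  exact: (forallP (nc j)).
apply/forallP => x; rewrite -(inj_eq (@ord_inj _)).
have [[j xj]|[le_m_x ltx]] := ord_old_or_new x.
  by rewrite !(medge_append_pair_old _ _ xj) (inj_eq (@ord_inj _)); apply: disj.
by rewrite !medge_append_pair_new // eqn_add2l pair_partner_negb_neq.
Qed.

Lemma append_pair_inj M M' b b' : append_pair M b = append_pair M' b' -> M = M'.
Proof.
move=> eqMM'; apply/val_inj/ffunP => j; apply: val_inj.
have le_m_n : m <= n by lia.
have xj : widen_ord le_m_n j = j :> nat by [].
have := congr1 (fun N => nat_of_ord (medge N (widen_ord le_m_n j))) eqMM'.
by rewrite !(medge_append_pair_old _ _ xj).
Qed.

End AppendPair.

Section FlipEmbedding.
Variables (T U : finType) (e : rel T) (e' : rel U) (f : T -> bool -> U).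
Hypothesis f_edge : forall y z c, e y z -> e' (f y c) (f z (~~ c)).
Hypothesis f_inj : forall y z c c', f y c = f z c' -> y = z.

Lemma connect_flip x y b : connect e x y -> exists c, connect e' (f x b) (f y c).
Proof.
case/connectP => p + ->; elim: p x b => [|z p IHp] x b /=; first by exists b.
case/andP => exz /(IHp z (~~ b)) [c zy]; exists c.
by apply: connect_trans zy; apply/connect1/f_edge.
Qed.

Lemma card_connect_le_flip x b : #|[set y | connect e x y]| <= #|[set z | connect e' (f x b) z]|.
Proof.
pose g y := if connect e' (f x b) (f y true) then f y true else f y false.
have g_inj : injective g by move=> y z; rewrite /g; case: ifP; case: ifP => _ _; apply: f_inj.
rewrite -(card_imset _ g_inj); apply/subset_leq_card/subsetP => _ /imsetP[y + ->].
rewrite !inE => /(connect_flip b) [c xy]; rewrite /g.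
by case: ifP => // /negbT; case: c xy => // ->.
Qed.

End FlipEmbedding.

Lemma separated_pair_medge k (N : matching (k + 2)) i b :
  (if b then is_block N i else is_antiblock N i) ->
  forall t (x : 'I_(2 * (k + 2))), t < 4 -> val x = (i + t) %% (2 * (k + 2)) ->
  val (medge N x) = (i + pair_partner b t) %% (2 * (k + 2)).
Proof.
have lt_mod j : j %% (2 * (k + 2)) < 2 * (k + 2) by rewrite ltn_mod; lia.
case: b => -[pair0 pair1] [|[|[|[|t]]]] // x _; rewrite ?addn0.
- exact: pair0.
- exact: pair1.
- exact: (medge_symmetric (lt_mod (i + 1)) pair1).
- exact: (medge_symmetric (lt_mod i) pair0).
- exact: pair0.
- exact: (medge_symmetric (lt_mod i) pair0).
- exact: pair1.
- exact: (medge_symmetric (lt_mod (i + 2)) pair1).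
Qed.

Lemma medge_rot_matching K s (M : matching K) x :
  medge (rot_matching s M) (rot_ord s x) = rot_ord s (medge M x).
Proof. exact: medge_transport. Qed.

(* Old label j goes to position (j + r) %% 2k, the new pair to positions 2k..2k+3, and the
   final rotation by i + 4 sends position p to (p + i + 4) %% (2k + 4), matching [relabel]. *)
Definition insert_pair k i r (M : matching k) block : matching (k + 2) :=
  rot_matching (i + 4) (append_pair (rot_matching r M) block).

Lemma insert_pair_adj k i r (M M' : matching k) b :
  dcm_adj M M' -> dcm_adj (insert_pair i r M b) (insert_pair i r M' (~~ b)).
Proof. by move=> adj; apply/transport_adj/append_pair_adj/transport_adj. Qed.

Lemma insert_pair_inj k i r (M M' : matching k) b b' :
  insert_pair i r M b = insert_pair i r M' b' -> M = M'.
Proof. by move/transport_inj/append_pair_inj/transport_inj. Qed.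

Lemma insert_pair_minus_pair k (M : matching k) (N : matching (k + 2)) i :
  is_separated_pair N i -> minus_pair_eq N i M -> exists r b, insert_pair i r M b = N.
Proof.
set n := 2 * (k + 2) => sep [r relabelN]; exists r.
have [b sepb] : exists b, if b then is_block N i else is_antiblock N i.
  by case: sep => [blk|ablk]; [exists true | exists false].
exists b; apply/val_inj/ffunP => x; rewrite -(rot_ordKV (i + 4) x).
set y := rot_ord _ x; apply: ord_inj.
change (nat_of_ord (medge (insert_pair i r M b) (rot_ord (i + 4) y))
        = medge N (rot_ord (i + 4) y)).
rewrite medge_rot_matching rot_ordE.
have rot_y u : (2 * k + u + (i + 4)) %% n = (i + u) %% n.
  by rewrite (_ : 2 * k + u + (i + 4) = i + u + n) ?modnDr //; rewrite /n; lia.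
have [[j yj]|[le_m_y lty]] := ord_old_or_new y.
  rewrite (medge_append_pair_old _ _ yj) -(rot_ordKV r j).
  set j0 := rot_ord _ j; rewrite (medge_rot_matching r) rot_ordE addnC.
  have x_j0 : val (rot_ord (i + 4) y) = relabel k i r j0.
    by rewrite rot_ordE /relabel -(rot_ordE r j0) rot_ordKV addnC [in RHS]/= -yj.
  exact/esym/(relabelN _ _ x_j0).
rewrite (medge_append_pair_new _ _ le_m_y) rot_y.
apply/esym/(separated_pair_medge sepb lty).
by rewrite rot_ordE -{1}(subnKC le_m_y) rot_y.
Qed.

Theorem mainTheorem9 (k : nat) (hk : 1 <= k) (M : matching k)
  (N : matching (k + 2)) (i : nat) :
  is_separated_pair N i -> minus_pair_eq N i M ->
  #|dcm_component M| <= #|dcm_component N|.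
Proof.
move=> sep relabelled; have [r [b <-]] := insert_pair_minus_pair sep relabelled.
apply: card_connect_le_flip; first exact: insert_pair_adj.
exact: insert_pair_inj.
Qed.
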